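(* Let $\alpha,\beta,\gamma>0$ with $\gamma^2-\alpha\beta>0$ and $n\ge2$. Then the pushforward $\mathrm{SH}_\#P_n$ of the signed Boltzmann measure $P_n$ on generalised snake configurations equals the Boltzmann measure $\mathbb{P}_n$ on six-vertex configurations on $\mathbb{T}_n$ with weights $$a_1=1,\quad a_2=\gamma^2-\alpha\beta,\quad b_1=\beta,\quad b_2=\alpha,\quad c_1=c_2=\gamma,$$ which satisfy $\triangle=\frac{a_1a_2+b_1b_2-c_1c_2}{2\sqrt{a_1a_2b_1b_2}}=0$. More precisely, for each pure snake configuration $\rho$, $\sum_{\bar\rho\in\mathrm{sh}^{-1}(\rho)}\bar w(\bar\rho)=w(\Phi^{-1}(\rho))$. Moreover, every Boltzmann measure on six-vertex configurations on $\mathbb{T}_n$ with positive weights satisfying $\triangle=0$ arises in this way for some such $\alpha,\beta,\gamma$.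
   Context: Six-vertex model on $\mathbb{T}_n=(\mathbb{Z}/n\mathbb{Z})^2$: orientations of edges with two in and two out at each vertex; vertex types (weights in brackets): type 1 ($a_1$): horizontal edges point right, vertical up; type 2 ($a_2$): horizontal left, vertical down; type 3 ($b_1$): horizontal right, vertical down; type 4 ($b_2$): horizontal left, vertical up; type 5 ($c_1$): horizontal edges into the vertex, vertical out; type 6 ($c_2$): horizontal out, vertical in. $w(\sigma)=\prod_v(\text{weight of type at }v)$, $\mathbb{P}_n(\sigma)=w(\sigma)/Z_n$. Snakes. $e^1=(1,0)$, $e^2=(0,1)$, $e^3=\frac12(e^1+e^2)$. Mid-edges $\mathbb{M}_n=\mathbb{M}_n^B\sqcup\mathbb{M}_n^W$, $\mathbb{M}_n^B=\{v+\frac12e^1:v\in\mathbb{T}_n\}$ (black), $\mathbb{M}_n^W=\{v+\frac12e^2:v\in\mathbb{T}_n\}$ (white), coordinates mod $n$. A generalised snake configuration is a permutation $\bar\rho$ of $\mathbb{M}_n$ with $\bar\rho(x)\in\{x,x+e^3,x+e^1\}$ for $x$ black and $\bar\rho(x)\in\{x,x+e^3,x+e^2\}$ for $x$ white; $\mathcal{GS}_n$ is the set of these. A crossing of $\bar\rho$ is a vertex $v$ with $\bar\rho(v-\frac12e^1)=v+\frac12e^1$ and $\bar\rho(v-\frac12e^2)=v+\frac12e^2$; $S(\bar\rho)$ is the number of crossings. Pure snake configurations ($\mathcal S_n$) are those with no crossings. $A(\bar\rho)=\#\{x:\bar\rho(x)=x+e^1\}$, $B(\bar\rho)=\#\{x:\bar\rho(x)=x+e^2\}$,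 $C(\bar\rho)=\#\{x:\bar\rho(x)=x+e^3\}$. Weight $\bar w(\bar\rho)=(-1)^{S(\bar\rho)}\alpha^{A(\bar\rho)}\beta^{B(\bar\rho)}\gamma^{C(\bar\rho)}$, $Z_n^{\mathcal{GS}}=\sum_{\bar\rho\in\mathcal{GS}_n}\bar w(\bar\rho)$, $P_n(\bar\rho)=\bar w(\bar\rho)/Z_n^{\mathcal{GS}}$ (a signed measure of total mass 1). The shape map $\mathrm{sh}:\mathcal{GS}_n\to\mathcal S_n$ replaces, at every crossing $v$, the values by $\rho(v-\frac12e^1)=v+\frac12e^2$, $\rho(v-\frac12e^2)=v+\frac12e^1$, leaving all else unchanged. The bijection $\Phi$ from six-vertex configurations to $\mathcal S_n$ is defined vertex by vertex: at $v$, with $W_v=v-\frac12e^1,S_v=v-\frac12e^2,E_v=v+\frac12e^1,N_v=v+\frac12e^2$: type 1: $\rho(W_v)=W_v,\rho(S_v)=S_v$; type 2: $\rho(W_v)=N_v,\rho(S_v)=E_v$; type 3: $\rho(W_v)=W_v,\rho(S_v)=N_v$; type 4: $\rho(W_v)=E_v,\rho(S_v)=S_v$; type 5: $\rho(W_v)=W_v,\rho(S_v)=E_v$; type 6: $\rho(W_v)=N_v,\rho(S_v)=S_v$. $\mathrm{SH}=\Phi^{-1}\circ\mathrm{sh}$, and for a signed measure $P$ on a finite set and surjection $\phi$, $(\phi_\#P)(e')=\sum_{e\in\phi^{-1}(e')}P(e)$. *)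

From HB Require Import structures.
From mathcomp Require Import all_boot all_order all_algebra.
Set Implicit Arguments. Unset Strict Implicit. Unset Printing Implicit Defensive.
Import Order.TTheory GRing.Theory Num.Theory.
Local Open Scope ring_scope.

Definition vert (n : nat) : finType := ('Z_n * 'Z_n)%type.
(* Mid-edges: (true, v) = v + e1/2 (black), (false, v) = v + e2/2 (white). *)
Definition mid (n : nat) : finType := (bool * vert n)%type.

Section Defs.
Variable n : nat.

Definition ve1 (v : vert n) : vert n := (v.1 + 1, v.2).
Definition ve2 (v : vert n) : vert n := (v.1, v.2 + 1).
Definition vm1 (v : vert n) : vert n := (v.1 - 1, v.2).
Definition vm2 (v : vert n) : vert n := (v.1, v.2 - 1).

(* translations of mid-edges by e1, e2, e3 = (e1+e2)/2 *)
Definition plus_e1 (x : mid n) : mid n := (x.1, ve1 x.2).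
Definition plus_e2 (x : mid n) : mid n := (x.1, ve2 x.2).
Definition plus_e3 (x : mid n) : mid n :=
  if x.1 then (false, ve1 x.2) else (true, ve2 x.2).

Definition Wm (v : vert n) : mid n := (true, vm1 v).
Definition Sm (v : vert n) : mid n := (false, vm2 v).
Definition Em (v : vert n) : mid n := (true, v).
Definition Nm (v : vert n) : mid n := (false, v).

Definition is_gsnake (f : {ffun mid n -> mid n}) : bool :=
  injectiveb f &&
  [forall x, [|| f x == x, f x == plus_e3 x |
               f x == (if x.1 then plus_e1 x else plus_e2 x)]].

Definition GS : {set {ffun mid n -> mid n}} := [set f | is_gsnake f].

Definition crossing (f : {ffun mid n -> mid n}) (v : vert n) : bool :=
  (f (Wm v) == Em v) && (f (Sm v) == Nm v).

Definition Scount (f : {ffun mid n -> mid n}) : nat := #|[set v | crossing f v]|.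
Definition Acount (f : {ffun mid n -> mid n}) : nat := #|[set x | f x == plus_e1 x]|.
Definition Bcount (f : {ffun mid n -> mid n}) : nat := #|[set x | f x == plus_e2 x]|.
Definition Ccount (f : {ffun mid n -> mid n}) : nat := #|[set x | f x == plus_e3 x]|.

Definition PS : {set {ffun mid n -> mid n}} :=
  [set f | is_gsnake f && [forall v, ~~ crossing f v]].

Definition wbar {R : nzRingType} (alpha beta gamma : R) (f : {ffun mid n -> mid n}) : R :=
  (-1) ^+ Scount f * alpha ^+ Acount f * beta ^+ Bcount f * gamma ^+ Ccount f.

Definition ZGS {R : nzRingType} (alpha beta gamma : R) : R :=
  \sum_(f in GS) wbar alpha beta gamma f.

Definition PGS {R : fieldType} (alpha beta gamma : R) (f : {ffun mid n -> mid n}) : R :=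
  wbar alpha beta gamma f / ZGS alpha beta gamma.

Definition sh (f : {ffun mid n -> mid n}) : {ffun mid n -> mid n} :=
  [ffun x => if x.1 then (if crossing f (ve1 x.2) then Nm (ve1 x.2) else f x)
             else (if crossing f (ve2 x.2) then Em (ve2 x.2) else f x)].

Inductive vtype := T1 | T2 | T3 | T4 | T5 | T6.

(* orientation: sigma (true, v) = true iff the horizontal edge v -- v+e1 points
   right; sigma (false, v) = true iff the vertical edge v -- v+e2 points up *)
Definition vtype_at (s : {ffun mid n -> bool}) (v : vert n) : option vtype :=
  match s (Wm v), s (Em v), s (Sm v), s (Nm v) with
  | true,  true,  true,  true  => Some T1
  | false, false, false, false => Some T2
  | true,  true,  false, false => Some T3
  | false, false, true,  true  => Some T4
  | true,  false, false, true  => Some T5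
  | false, true,  true,  false => Some T6
  | _, _, _, _ => None
  end.

Definition SV : {set {ffun mid n -> bool}} :=
  [set s | [forall v, if vtype_at s v is Some _ then true else false]].

Definition sv_weight {R : nzRingType} (wt : vtype -> R) (s : {ffun mid n -> bool}) : R :=
  \prod_(v : vert n) (match vtype_at s v with Some t => wt t | None => 0 end).

Definition Zsv {R : nzRingType} (wt : vtype -> R) : R :=
  \sum_(s in SV) sv_weight wt s.

Definition Psv {R : fieldType} (wt : vtype -> R) (s : {ffun mid n -> bool}) : R :=
  sv_weight wt s / Zsv wt.

Definition Phi (s : {ffun mid n -> bool}) : {ffun mid n -> mid n} :=
  [ffun x =>
     if x.1 then
       let v := ve1 x.2 in (* x = W_v *)
       match vtype_at s v with
       | Some T2 | Some T6 => Nm v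
       | Some T4 => Em v
       | _ => x
       end
     else
       let v := ve2 x.2 in (* x = S_v *)
       match vtype_at s v with
       | Some T2 | Some T5 => Em v
       | Some T3 => Nm v
       | _ => x
       end].

(* pushforward SH_# P_n evaluated at a six-vertex configuration s:
   SH^{-1}(s) = { f in GS | sh f = Phi s } since SH = Phi^{-1} o sh *)
Definition SH_push {R : fieldType} (alpha beta gamma : R) (s : {ffun mid n -> bool}) : R :=
  \sum_(f in GS | sh f == Phi s) PGS alpha beta gamma f.

End Defs.

Arguments GS n : clear implicits.
Arguments PS n : clear implicits.
Arguments SV n : clear implicits.

Definition snake_wt {R : nzRingType} (alpha beta gamma : R) (t : vtype) : R :=
  match t with
  | T1 => 1 | T2 => gamma ^+ 2 - alpha * beta | T3 => beta | T4 => alpha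
  | T5 => gamma | T6 => gamma
  end.

Definition delta {R : rcfType} (wt : vtype -> R) : R :=
  (wt T1 * wt T2 + wt T3 * wt T4 - wt T5 * wt T6)
    / (2 * Num.sqrt (wt T1 * wt T2 * wt T3 * wt T4)).

From HB Require Import structures.
From mathcomp Require Import all_boot all_order all_algebra.
From mathcomp Require Import ring.
Import Order.TTheory GRing.Theory Num.Theory.
Set Implicit Arguments. Unset Strict Implicit. Unset Printing Implicit Defensive.
Local Open Scope ring_scope.

(* A six-vertex configuration s is recovered from the pure snake Phi s as the
   set of mid-edges that Phi s fixes, and every pure snake arises this way.
   A generalised snake f is the pure snake sh f with crossings inserted at a
   set C of vertices where sh f sends W_v to N_v and S_v to E_v, that is at
   type-2 vertices of Phi^-1 (sh f); conversely every such C gives a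
   generalised snake.  The signed weight is a product over vertices in which a
   crossing contributes -alpha beta in place of gamma^2, so summing over C turns
   the type-2 weight gamma^2 into gamma^2 - alpha beta = a2.  Conversely, Delta
   = 0 means c1 c2 = a1 a2 + b1 b2; dividing all weights by a1 and replacing c1
   and c2 by sqrt (c1 c2) leaves the Boltzmann measure unchanged, the latter
   because on the torus every configuration has as many vertices of type 5 as
   of type 6. *)

Lemma addr1_eqF (R : nzRingType) (a : R) : (a + 1 == a) = false.
Proof. by rewrite -subr_eq0 addrAC subrr add0r oner_eq0. Qed.

Lemma prodr_if1 (R : comNzRingType) (I : finType) (P : pred I) (x : R) :
  \prod_i (if P i then x else 1) = x ^+ #|[set i | P i]|.
Proof.
by rewrite -big_mkcond /= -prodr_const; apply: eq_bigl => i; rewrite inE.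
Qed.

Section Torus.
Variable n : nat.
Implicit Types (v w : vert n) (x y : mid n).

Lemma ve1K : cancel (@ve1 n) (@vm1 n).
Proof. by case=> a b; rewrite /ve1 /vm1 /= addrK. Qed.
Lemma vm1K : cancel (@vm1 n) (@ve1 n).
Proof. by case=> a b; rewrite /ve1 /vm1 /= subrK. Qed.
Lemma ve2K : cancel (@ve2 n) (@vm2 n).
Proof. by case=> a b; rewrite /ve2 /vm2 /= addrK. Qed.
Lemma vm2K : cancel (@vm2 n) (@ve2 n).
Proof. by case=> a b; rewrite /ve2 /vm2 /= subrK. Qed.

Lemma ve1_eqF v : (ve1 v == v) = false.
Proof. by case: v => a b; rewrite xpair_eqE addr1_eqF. Qed.
Lemma ve2_eqF v : (ve2 v == v) = false.
Proof. by case: v => a b; rewrite xpair_eqE addr1_eqF andbF. Qed.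
Lemma ve1_ve2_eqF v : (ve1 v == ve2 v) = false.
Proof. by case: v => a b; rewrite xpair_eqE addr1_eqF. Qed.
Lemma vm1_eqF v : (vm1 v == v) = false.
Proof. by rewrite -(can_eq ve1K) vm1K eq_sym ve1_eqF. Qed.
Lemma vm2_eqF v : (vm2 v == v) = false.
Proof. by rewrite -(can_eq ve2K) vm2K eq_sym ve2_eqF. Qed.

Variant mid_spec : mid n -> Type :=
  | MidW v : mid_spec (Wm v)
  | MidS v : mid_spec (Sm v).

Lemma midP x : mid_spec x.
Proof.
case: x => [[] w]; first by rewrite -[w]ve1K; apply: MidW.
by rewrite -[w]ve2K; apply: MidS.
Qed.

Lemma Wm_Em_eqF v : (Wm v == Em v) = false.
Proof. by rewrite xpair_eqE vm1_eqF. Qed.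
Lemma Em_Wm_eqF v : (Em v == Wm v) = false.
Proof. by rewrite eq_sym Wm_Em_eqF. Qed.
Lemma Sm_Nm_eqF v : (Sm v == Nm v) = false.
Proof. by rewrite xpair_eqE vm2_eqF. Qed.
Lemma Nm_Sm_eqF v : (Nm v == Sm v) = false.
Proof. by rewrite eq_sym Sm_Nm_eqF. Qed.

Definition mid_eqE := (Wm_Em_eqF, Em_Wm_eqF, Sm_Nm_eqF, Nm_Sm_eqF, eqxx).

Lemma plus_e1_Wm v : plus_e1 (Wm v) = Em v.
Proof. by rewrite /plus_e1 /= vm1K. Qed.
Lemma plus_e3_Wm v : plus_e3 (Wm v) = Nm v.
Proof. by rewrite /plus_e3 /= vm1K. Qed.
Lemma plus_e2_Sm v : plus_e2 (Sm v) = Nm v.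
Proof. by rewrite /plus_e2 /= vm2K. Qed.
Lemma plus_e3_Sm v : plus_e3 (Sm v) = Em v.
Proof. by rewrite /plus_e3 /= vm2K. Qed.

Lemma eq_plus_e1F x : (x == plus_e1 x) = false.
Proof. by case: x => b w; rewrite xpair_eqE eqxx eq_sym ve1_eqF. Qed.
Lemma eq_plus_e2F x : (x == plus_e2 x) = false.
Proof. by case: x => b w; rewrite xpair_eqE eqxx eq_sym ve2_eqF. Qed.
Lemma eq_plus_e3F x : (x == plus_e3 x) = false.
Proof. by case: x => [[] w]. Qed.
Lemma plus_e1_e2F x : (plus_e1 x == plus_e2 x) = false.
Proof. by case: x => b w; rewrite xpair_eqE eqxx ve1_ve2_eqF. Qed.
Lemma plus_e1_e3F x : (plus_e1 x == plus_e3 x) = false.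
Proof. by case: x => [[] w]. Qed.
Lemma plus_e2_e3F x : (plus_e2 x == plus_e3 x) = false.
Proof. by case: x => [[] w]. Qed.

Definition next_vert x : vert n := if x.1 then ve1 x.2 else ve2 x.2.

Lemma next_vert_Wm v : next_vert (Wm v) = v.
Proof. exact: vm1K. Qed.
Lemma next_vert_Sm v : next_vert (Sm v) = v.
Proof. exact: vm2K. Qed.

Definition swap_at (C : {set vert n}) x : mid n :=
  if next_vert x \in C then (if x.1 then Sm (next_vert x) else Wm (next_vert x))
  else x.

Lemma swap_at_Wm C v : swap_at C (Wm v) = if v \in C then Sm v else Wm v.
Proof. by rewrite /swap_at next_vert_Wm. Qed.
Lemma swap_at_Sm C v : swap_at C (Sm v) = if v \in C then Wm v else Sm v.
Proof. by rewrite /swap_at next_vert_Sm. Qed.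

Lemma swap_atK C : involutive (swap_at C).
Proof.
move=> x; case: x / midP => v; rewrite ?swap_at_Wm ?swap_at_Sm;
  by case: ifP => vC; rewrite ?swap_at_Wm ?swap_at_Sm ?vC.
Qed.

Lemma big_mid (R : comNzRingType) (F : mid n -> R) :
  \prod_x F x = \prod_v (F (Wm v) * F (Sm v)).
Proof.
rewrite (eq_bigr (fun x => F (x.1, x.2))) => [|[]//].
rewrite -(pair_bigA _ (fun b w => F (b, w))) big_bool /= big_split /=.
by congr (_ * _); apply: reindex_inj; [exact: (can_inj vm1K) | exact: (can_inj vm2K)].
Qed.

End Torus.

Section GeneralisedSnakes.
Variable n : nat.
Implicit Types (f : {ffun mid n -> mid n}) (v : vert n).

Lemma is_gsnakeE f : is_gsnake f = injectiveb f &&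
  [forall v, [|| f (Wm v) == Wm v, f (Wm v) == Nm v | f (Wm v) == Em v] &&
             [|| f (Sm v) == Sm v, f (Sm v) == Em v | f (Sm v) == Nm v]].
Proof.
congr (_ && _); apply/forallP/forallP => [h v | h x].
  move: (h (Wm v)) (h (Sm v)) => /=.
  by rewrite plus_e1_Wm plus_e3_Wm plus_e2_Sm plus_e3_Sm => -> ->.
by case: x / midP => v /=; move/andP: (h v) => [];
  rewrite ?plus_e1_Wm ?plus_e3_Wm ?plus_e2_Sm ?plus_e3_Sm.
Qed.

Variable f : {ffun mid n -> mid n}.
Hypothesis gsf : is_gsnake f.

Lemma gsnake_inj : injective f.
Proof. by case/andP: gsf => /injectiveP. Qed.

Lemma gsnake_Wm v : [\/ f (Wm v) = Wm v, f (Wm v) = Nm v | f (Wm v) = Em v].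
Proof.
move: gsf; rewrite is_gsnakeE => /andP[_ /forallP/(_ v)/andP[+ _]].
by case/or3P => /eqP; [apply: Or31 | apply: Or32 | apply: Or33].
Qed.

Lemma gsnake_Sm v : [\/ f (Sm v) = Sm v, f (Sm v) = Em v | f (Sm v) = Nm v].
Proof.
move: gsf; rewrite is_gsnakeE => /andP[_ /forallP/(_ v)/andP[_]].
by case/or3P => /eqP; [apply: Or31 | apply: Or32 | apply: Or33].
Qed.

(* By injectivity, since the only possible preimages of E_v are E_v, W_v and S_v
   (and those of N_v are N_v, W_v and S_v). *)
Lemma gsnake_fix_Em v : (f (Em v) == Em v) = (f (Wm v) != Em v) && (f (Sm v) != Em v).
Proof.
apply/eqP/andP => [fE | [fW fS]].
  by rewrite -fE !(inj_eq gsnake_inj) !mid_eqE.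
have [g _ gK] := injF_bij gsnake_inj.
move: (gK (Em v)); case: (g (Em v)) / midP => u.
  case: (gsnake_Wm u) => e; rewrite e; [by move=> <- | by case | case=> uv].
  by move: fW; rewrite -uv e eqxx.
case: (gsnake_Sm u) => e; rewrite e; [by case | case=> uv | by case].
by move: fS; rewrite -uv e eqxx.
Qed.

Lemma gsnake_fix_Nm v : (f (Nm v) == Nm v) = (f (Wm v) != Nm v) && (f (Sm v) != Nm v).
Proof.
apply/eqP/andP => [fN | [fW fS]].
  by rewrite -fN !(inj_eq gsnake_inj) !mid_eqE.
have [g _ gK] := injF_bij gsnake_inj.
move: (gK (Nm v)); case: (g (Nm v)) / midP => u.
  case: (gsnake_Wm u) => e; rewrite e; [by case | case=> uv | by case].
  by move: fW; rewrite -uv e eqxx.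
case: (gsnake_Sm u) => e; rewrite e; [by move=> <- | by case | case=> uv].
by move: fS; rewrite -uv e eqxx.
Qed.

End GeneralisedSnakes.

(** * The bijection Phi *)

Ltac case_vtype s v :=
  let eW := fresh "eW" in let eE := fresh "eE" in
  let eS := fresh "eS" in let eN := fresh "eN" in
  rewrite /vtype_at; case eW: (s (Wm v)); case eE: (s (Em v));
  case eS: (s (Sm v)); case eN: (s (Nm v)); rewrite /= ?eW ?eE ?eS ?eN.

Section SixVertex.
Variable n : nat.
Implicit Types (s : {ffun mid n -> bool}) (v : vert n) (x y : mid n).

Lemma SV_vtype s v : s \in SV n -> isSome (vtype_at s v).
Proof. by rewrite inE => /forallP /(_ v); case: (vtype_at s v). Qed.

Lemma Phi_Wm s v : Phi s (Wm v) =
  match vtype_at s v with Some T2 | Some T6 => Nm v | Some T4 => Em v | _ => Wm v end.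
Proof. by rewrite ffunE /= vm1K. Qed.

Lemma Phi_Sm s v : Phi s (Sm v) =
  match vtype_at s v with Some T2 | Some T5 => Em v | Some T3 => Nm v | _ => Sm v end.
Proof. by rewrite ffunE /= vm2K. Qed.

Lemma Phi_fixE s x : s \in SV n -> (Phi s x == x) = s x.
Proof.
move=> sSV; case: x / midP => v; rewrite ?Phi_Wm ?Phi_Sm;
  by have := SV_vtype v sSV; case_vtype s v; rewrite ?mid_eqE.
Qed.

Lemma Phi_orientation s x : s \in SV n -> s (Phi s x) = s x.
Proof.
move=> sSV; case: x / midP => v; rewrite ?Phi_Wm ?Phi_Sm;
  by have := SV_vtype v sSV; case_vtype s v.
Qed.

Lemma Phi_moved_vert s x : s \in SV n -> ~~ s x -> (Phi s x).2 = next_vert x.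
Proof.
move=> sSV; case: x / midP => v;
  rewrite ?Phi_Wm ?Phi_Sm ?next_vert_Wm ?next_vert_Sm;
  by have := SV_vtype v sSV; case_vtype s v.
Qed.

Lemma Phi_Wm_Sm_neq s v : s \in SV n -> Phi s (Wm v) != Phi s (Sm v).
Proof.
by move=> /(SV_vtype v); rewrite Phi_Wm Phi_Sm; case_vtype s v; rewrite ?mid_eqE.
Qed.

Lemma Phi_inj s : s \in SV n -> injective (Phi s).
Proof.
move=> sSV x y e.
have sxy : s x = s y by rewrite -(Phi_orientation x sSV) -(Phi_orientation y sSV) e.
have [sx | sx] := boolP (s x).
  have Px : Phi s x = x by apply/eqP; rewrite Phi_fixE.
  have Py : Phi s y = y by apply/eqP; rewrite Phi_fixE // -sxy.
  by rewrite -Px e Py.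
have : next_vert x = next_vert y.
  by rewrite -(Phi_moved_vert sSV sx) -(Phi_moved_vert sSV) -?sxy // e.
move: e; clear sx sxy; case: x / midP => u; case: y / midP => w;
  rewrite ?next_vert_Wm ?next_vert_Sm => e uw; rewrite -uw in e * => //;
  by move: (Phi_Wm_Sm_neq u sSV); rewrite e eqxx.
Qed.

Lemma Phi_no_crossing s v : s \in SV n -> ~~ crossing (Phi s) v.
Proof.
move=> /(SV_vtype v); rewrite /crossing Phi_Wm Phi_Sm.
by case_vtype s v; rewrite ?mid_eqE.
Qed.

Lemma Phi_PS s : s \in SV n -> Phi s \in PS n.
Proof.
move=> sSV; rewrite inE is_gsnakeE -andbA; apply/and3P; split.
- by apply/injectiveP; apply: Phi_inj.
- apply/forallP => v; rewrite Phi_Wm Phi_Sm.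
  by case: (vtype_at s v) => [[]|]; rewrite !eqxx ?orbT.
- by apply/forallP => v; apply: Phi_no_crossing.
Qed.

Lemma Phi_injSV : {in SV n &, injective (@Phi n)}.
Proof.
move=> s1 s2 s1SV s2SV e; apply/ffunP => x.
by rewrite -(Phi_fixE x s1SV) -(Phi_fixE x s2SV) e.
Qed.

Lemma PS_vertex r v : r \in PS n ->
  let s := [ffun x => r x == x] in
  [/\ isSome (vtype_at s v), Phi s (Wm v) = r (Wm v) & Phi s (Sm v) = r (Sm v)].
Proof.
rewrite inE => /andP[gsr /forallP/(_ v)] ncr s.
have rWS : r (Wm v) != r (Sm v) by rewrite (inj_eq (gsnake_inj gsr)).
rewrite Phi_Wm Phi_Sm /vtype_at !ffunE (gsnake_fix_Em gsr) (gsnake_fix_Nm gsr).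
move: ncr rWS; rewrite /crossing.
by case: (gsnake_Wm gsr v) => ->; case: (gsnake_Sm gsr v) => ->; rewrite ?mid_eqE.
Qed.

Lemma PS_Phi : PS n = @Phi n @: SV n.
Proof.
apply/setP => r; apply/idP/imsetP => [rPS | [s sSV ->]]; last exact: Phi_PS.
exists [ffun x => r x == x].
  by rewrite inE; apply/forallP => v; case: (PS_vertex v rPS).
apply/ffunP => x; case: x / midP => v; by case: (PS_vertex v rPS).
Qed.

End SixVertex.

(** * The fibres of the shape map *)

Section ShapeMap.
Variable n : nat.
Implicit Types (f : {ffun mid n -> mid n}) (s : {ffun mid n -> bool}) (v : vert n).

Definition crossings f : {set vert n} := [set v | crossing f v].

Lemma sh_Wm f v : sh f (Wm v) = if crossing f v then Nm v else f (Wm v).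
Proof. by rewrite ffunE /= vm1K. Qed.
Lemma sh_Sm f v : sh f (Sm v) = if crossing f v then Em v else f (Sm v).
Proof. by rewrite ffunE /= vm2K. Qed.

Lemma sh_swap f : sh f =1 f \o swap_at (crossings f).
Proof.
move=> x; case: x / midP => v /=; rewrite ?sh_Wm ?sh_Sm ?swap_at_Wm ?swap_at_Sm inE;
  by case: ifP => // /andP[/eqP ? /eqP ?].
Qed.

Lemma sh_PS f : f \in GS n -> sh f \in PS n.
Proof.
rewrite !inE is_gsnakeE => /andP[/injectiveP injf /forallP steps].
rewrite is_gsnakeE -andbA; apply/and3P; split.
- apply/injectiveP => x y; rewrite !sh_swap => /injf.
  exact: (can_inj (swap_atK _)).
- apply/forallP => v; rewrite sh_Wm sh_Sm.
  by case: ifP => _; rewrite ?steps // !eqxx !orbT.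
- apply/forallP => v; rewrite {1}/crossing sh_Wm sh_Sm.
  by case: ifP => [_ | /negbT]; rewrite ?mid_eqE.
Qed.

(* These are exactly the vertices of type 2 of s. *)
Definition crossable s : {set vert n} :=
  [set v | (Phi s (Wm v) == Nm v) && (Phi s (Sm v) == Em v)].

Definition Phi_cross s (C : {set vert n}) : {ffun mid n -> mid n} :=
  [ffun x => Phi s (swap_at C x)].

Lemma sh_fibre_crossings f s : sh f = Phi s -> crossings f \subset crossable s.
Proof.
move=> shf; apply/subsetP => v; rewrite !inE -shf sh_Wm sh_Sm => ->.
by rewrite !eqxx.
Qed.

Lemma sh_fibre_Phi_cross f s : sh f = Phi s -> f = Phi_cross s (crossings f).
Proof. by move=> shf; apply/ffunP => x; rewrite ffunE -shf sh_swap /= swap_atK. Qed.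

Section PhiCross.
Variables (s : {ffun mid n -> bool}) (C : {set vert n}).
Hypotheses (sSV : s \in SV n) (Ccr : C \subset crossable s).

Lemma Phi_cross_Wm v : Phi_cross s C (Wm v) = if v \in C then Em v else Phi s (Wm v).
Proof.
rewrite ffunE swap_at_Wm; case: ifP => // /(subsetP Ccr).
by rewrite inE => /andP[_ /eqP].
Qed.

Lemma Phi_cross_Sm v : Phi_cross s C (Sm v) = if v \in C then Nm v else Phi s (Sm v).
Proof.
rewrite ffunE swap_at_Sm; case: ifP => // /(subsetP Ccr).
by rewrite inE => /andP[/eqP].
Qed.

Lemma crossings_Phi_cross : crossings (Phi_cross s C) = C.
Proof.
apply/setP => v; rewrite inE /crossing Phi_cross_Wm Phi_cross_Sm.
by case: ifP => _; [rewrite !eqxx | exact/negbTE/Phi_no_crossing].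
Qed.

Lemma Phi_cross_GS : Phi_cross s C \in GS n.
Proof.
have := Phi_PS sSV; rewrite !inE !is_gsnakeE => /andP[/andP[_ /forallP steps] _].
apply/andP; split.
  apply/injectiveP => x y; rewrite ![Phi_cross _ _ _]ffunE => /(Phi_inj sSV).
  exact: (can_inj (swap_atK _)).
apply/forallP => v; rewrite Phi_cross_Wm Phi_cross_Sm.
by case: ifP => _; rewrite ?steps // !eqxx !orbT.
Qed.

Lemma sh_Phi_cross : sh (Phi_cross s C) = Phi s.
Proof.
apply/ffunP => x; rewrite sh_swap crossings_Phi_cross /= ffunE.
by rewrite swap_atK.
Qed.

End PhiCross.

Lemma sh_fibre s : s \in SV n ->
  [pred f | (f \in GS n) && (sh f == Phi s)] =i Phi_cross s @: powerset (crossable s).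
Proof.
move=> sSV f; rewrite inE; apply/andP/imsetP => [[_ /eqP shf] | [C]].
  exists (crossings f); rewrite ?powersetE.
  - exact: sh_fibre_crossings.
  - exact: sh_fibre_Phi_cross.
rewrite powersetE => Ccr ->.
by rewrite Phi_cross_GS // sh_Phi_cross.
Qed.

End ShapeMap.

Section Weights.
Variables (R : comNzRingType) (a b c : R) (n : nat).
Implicit Types (f : {ffun mid n -> mid n}) (s : {ffun mid n -> bool}).
Implicit Types (v : vert n) (x : mid n).

Definition step_wt x (y : mid n) : R :=
  (if y == plus_e1 x then a else 1) * (if y == plus_e2 x then b else 1) *
  (if y == plus_e3 x then c else 1).

Definition vertex_wt f v : R :=
  (if crossing f v then -1 else 1) *
  (step_wt (Wm v) (f (Wm v)) * step_wt (Sm v) (f (Sm v))).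

Lemma step_wt_id x : step_wt x x = 1.
Proof. by rewrite /step_wt eq_plus_e1F eq_plus_e2F eq_plus_e3F !mulr1. Qed.
Lemma step_wt_e1 x : step_wt x (plus_e1 x) = a.
Proof. by rewrite /step_wt eqxx plus_e1_e2F plus_e1_e3F !mulr1. Qed.
Lemma step_wt_e2 x : step_wt x (plus_e2 x) = b.
Proof. by rewrite /step_wt eqxx eq_sym plus_e1_e2F plus_e2_e3F mul1r mulr1. Qed.
Lemma step_wt_e3 x : step_wt x (plus_e3 x) = c.
Proof. by rewrite /step_wt eqxx eq_sym plus_e1_e3F eq_sym plus_e2_e3F !mul1r. Qed.

Lemma step_wt_Wm_Nm v : step_wt (Wm v) (Nm v) = c.
Proof. by rewrite -plus_e3_Wm step_wt_e3. Qed.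
Lemma step_wt_Wm_Em v : step_wt (Wm v) (Em v) = a.
Proof. by rewrite -plus_e1_Wm step_wt_e1. Qed.
Lemma step_wt_Sm_Em v : step_wt (Sm v) (Em v) = c.
Proof. by rewrite -plus_e3_Sm step_wt_e3. Qed.
Lemma step_wt_Sm_Nm v : step_wt (Sm v) (Nm v) = b.
Proof. by rewrite -plus_e2_Sm step_wt_e2. Qed.

Definition step_wtE :=
  (step_wt_id, step_wt_Wm_Nm, step_wt_Wm_Em, step_wt_Sm_Em, step_wt_Sm_Nm).

Lemma wbar_prod f : wbar a b c f = \prod_v vertex_wt f v.
Proof.
rewrite /wbar /Scount /Acount /Bcount /Ccount -!prodr_if1 -!mulrA.
rewrite -!big_split /= big_mid.
by rewrite -big_split; apply: eq_bigr => v _; rewrite /vertex_wt /step_wt /= !mulrA.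
Qed.

Lemma vertex_wt_Phi s v : s \in SV n ->
  vertex_wt (Phi s) v + (if v \in crossable s then - (a * b) else 0) =
  if vtype_at s v is Some t then snake_wt a b c t else 0.
Proof.
move=> /(SV_vtype v); rewrite /vertex_wt /crossing inE Phi_Wm Phi_Sm.
by case_vtype s v => // _; rewrite ?step_wtE ?mid_eqE /= ?addr0 ?mul1r ?mulr1 ?expr2.
Qed.

Lemma vertex_wt_Phi_cross s (C : {set vert n}) v : C \subset crossable s ->
  vertex_wt (Phi_cross s C) v = if v \in C then - (a * b) else vertex_wt (Phi s) v.
Proof.
move=> Ccr; rewrite /vertex_wt /crossing Phi_cross_Wm // Phi_cross_Sm //.
by case: (v \in C); rewrite ?eqxx ?step_wtE ?mulN1r.
Qed.

Lemma sum_wbar_sh_fibre s : s \in SV n ->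
  \sum_(f in GS n | sh f == Phi s) wbar a b c f = sv_weight (snake_wt a b c) s.
Proof.
move=> sSV; set D := crossable s.
rewrite (eq_bigl _ _ (sh_fibre sSV)) big_imset => [|C1 C2]; last first.
  rewrite !powersetE => C1D C2D eC.
  by rewrite -(crossings_Phi_cross sSV C1D) -(crossings_Phi_cross sSV C2D) eC.
(* Expand the product over subsets of vertices; subsets not contained in D
   contribute 0. *)
have -> : sv_weight (snake_wt a b c) s =
          \prod_v ((if v \in D then - (a * b) else 0) + vertex_wt (Phi s) v).
  by apply: eq_bigr => v _; rewrite addrC vertex_wt_Phi.
rewrite [RHS]bigA_distr [LHS]big_mkcond; apply: eq_bigr => C _ /=.
rewrite powersetE; have [CD | /subsetPn[v vC vD]] := boolP (C \subset D).
  rewrite wbar_prod; apply: eq_bigr => v _; rewrite vertex_wt_Phi_cross //.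
  by case: ifP => // /(subsetP CD) ->.
by rewrite (bigD1 v) //= vC (negbTE vD) mul0r.
Qed.

Lemma ZGS_Zsv : ZGS n a b c = Zsv n (snake_wt a b c).
Proof.
rewrite /ZGS (partition_big (@sh n) (mem (PS n))) => [|f]; last exact: sh_PS.
rewrite /= PS_Phi big_imset /=; last exact: Phi_injSV.
by apply: eq_bigr => s sSV; apply: sum_wbar_sh_fibre.
Qed.

End Weights.

Lemma SH_push_Psv (F : fieldType) (a b c : F) n (s : {ffun mid n -> bool}) :
  s \in SV n -> SH_push a b c s = Psv (snake_wt a b c) s.
Proof.
by move=> sSV; rewrite /SH_push /PGS /Psv -mulr_suml sum_wbar_sh_fibre // ZGS_Zsv.
Qed.

(** * The converse *)

Section Gauge.
Variables (n : nat) (R : comNzRingType).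
Implicit Types (s : {ffun mid n -> bool}) (wt : vtype -> R).

Definition is_T5 (o : option vtype) : nat := if o is Some T5 then 1 else 0.
Definition is_T6 (o : option vtype) : nat := if o is Some T6 then 1 else 0.

(* At each vertex s (E_v) + [type 5] = s (W_v) + [type 6]; summing over the
   torus, the horizontal terms cancel since E_v = W_(v + e1). *)
Lemma sum_T5_T6 s : s \in SV n ->
  (\sum_v is_T5 (vtype_at s v) = \sum_v is_T6 (vtype_at s v))%N.
Proof.
move=> sSV; apply/eqP; rewrite -(eqn_add2l (\sum_v s (Em v))).
rewrite {2}(reindex_inj (can_inj (@vm1K n))) /= -!big_split /=.
apply/eqP/eq_bigr => v _.
by have := SV_vtype v sSV; rewrite /is_T5 /is_T6; case_vtype s v.
Qed.

Lemma sv_weight_scale (k : R) wt1 wt2 s : (forall t, wt1 t = k * wt2 t) ->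
  sv_weight wt1 s = k ^+ #|vert n| * sv_weight wt2 s.
Proof.
move=> hwt; rewrite /sv_weight -prodr_const -big_split /=.
by apply: eq_bigr => v _; case: (vtype_at s v) => [t|]; rewrite ?hwt ?mulr0.
Qed.

Lemma sv_weight_gauge (p q : R) wt1 wt2 s : s \in SV n -> p * q = 1 ->
  (forall t, wt1 t = (if t is T5 then p else if t is T6 then q else 1) * wt2 t) ->
  sv_weight wt1 s = sv_weight wt2 s.
Proof.
move=> sSV pq1 hwt; rewrite /sv_weight.
rewrite (eq_bigr (fun v => p ^+ is_T5 (vtype_at s v) * q ^+ is_T6 (vtype_at s v) *
  if vtype_at s v is Some t then wt2 t else 0)) => [|v _]; last first.
  by case: (vtype_at s v) => [[]|]; rewrite ?hwt /= ?expr0 ?expr1 ?mulr0 ?mul1r ?mulr1.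
by rewrite !big_split /= !prodrXr sum_T5_T6 // -exprMn pq1 expr1n mul1r.
Qed.

End Gauge.

Lemma Psv_scale (F : fieldType) n (wt1 wt2 : vtype -> F) (k : F) : k != 0 ->
  (forall s, s \in SV n -> sv_weight wt1 s = k * sv_weight wt2 s) ->
  {in SV n, Psv wt1 =1 Psv wt2}.
Proof.
move=> k0 hwt s sSV; rewrite /Psv /Zsv hwt // (eq_bigr _ hwt) -mulr_sumr.
by rewrite invfM mulrACA divff // mul1r.
Qed.

Lemma delta_snake_wt (R : rcfType) (a b c : R) : delta (snake_wt a b c) = 0.
Proof. by rewrite /delta /= mul1r (mulrC b) expr2 subrK subrr mul0r. Qed.

Lemma delta_eq0 (R : rcfType) (wt : vtype -> R) : (forall t, 0 < wt t) ->
  delta wt = 0 -> wt T5 * wt T6 = wt T1 * wt T2 + wt T3 * wt T4.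
Proof.
move=> wt_gt0; have sqrt_gt0 : 0 < Num.sqrt (wt T1 * wt T2 * wt T3 * wt T4).
  by rewrite sqrtr_gt0 !mulr_gt0.
move=> /eqP; rewrite /delta mulf_eq0 invr_eq0 mulf_eq0 pnatr_eq0 (gt_eqF sqrt_gt0) /=.
by rewrite orbF subr_eq0 => /eqP ->.
Qed.

Lemma delta0_SH_push (R : rcfType) n (wt : vtype -> R) :
  (forall t, 0 < wt t) -> delta wt = 0 ->
  exists alpha beta gamma : R,
    [/\ 0 < alpha, 0 < beta, 0 < gamma, 0 < gamma ^+ 2 - alpha * beta
      & forall s, s \in SV n -> Psv wt s = SH_push alpha beta gamma s].
Proof.
move=> wt_gt0 /(delta_eq0 wt_gt0).
set a1 := wt T1; set a2 := wt T2; set b1 := wt T3; set b2 := wt T4.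
set c1 := wt T5; set c2 := wt T6 => c1c2E.
have [a1_gt0 a2_gt0 b1_gt0] : [/\ 0 < a1, 0 < a2 & 0 < b1] by split; apply: wt_gt0.
have [b2_gt0 c1_gt0 c2_gt0] : [/\ 0 < b2, 0 < c1 & 0 < c2] by split; apply: wt_gt0.
set g := Num.sqrt (c1 * c2).
have g_gt0 : 0 < g by rewrite sqrtr_gt0 mulr_gt0.
have ggE : g * g = c1 * c2 by rewrite -expr2 sqr_sqrtr // ltW ?mulr_gt0.
have [a1_neq0 g_neq0] : a1 != 0 /\ g != 0 by rewrite !gt_eqF.
have a2E : (g / a1) ^+ 2 - b2 / a1 * (b1 / a1) = a2 / a1.
  have -> : (g / a1) ^+ 2 - b2 / a1 * (b1 / a1) = (g * g - b1 * b2) / (a1 * a1) by field.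
  by rewrite ggE c1c2E; field.
exists (b2 / a1), (b1 / a1), (g / a1); split; rewrite ?a2E ?divr_gt0 //.
move=> s sSV; rewrite SH_push_Psv //; apply: (@Psv_scale _ _ _ _ (a1 ^+ #|vert n|)) => //.
  by rewrite expf_neq0.
move=> {}s {}sSV.
rewrite (@sv_weight_scale _ _ a1 _ (fun t => wt t / a1)) => [|t]; last first.
  by rewrite mulrC divfK.
congr (_ * _); apply: (@sv_weight_gauge _ _ (c1 / g) (c2 / g)) => //.
  by rewrite mulrACA -invfM ggE divff // mulf_neq0 // gt_eqF.
by case; rewrite /= -/a1 -/a2 -/b1 -/b2 -/c1 -/c2 ?mul1r ?a2E ?divff // mulrA divfK.
Qed.

Theorem theorem2p3 (R : rcfType) (n : nat) (alpha beta gamma : R) :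
  (1 < n)%N -> 0 < alpha -> 0 < beta -> 0 < gamma ->
  0 < gamma ^+ 2 - alpha * beta ->
  [/\ delta (snake_wt alpha beta gamma) = 0,
      [/\ {in SV n &, injective (@Phi n)},
           (forall s, s \in SV n -> Phi s \in PS n)
         & (forall rho, rho \in PS n -> exists2 s, s \in SV n & Phi s = rho)],
      (forall f, f \in GS n -> sh f \in PS n),
      (forall s, s \in SV n ->
         \sum_(f in GS n | sh f == Phi s) wbar alpha beta gamma f
           = sv_weight (snake_wt alpha beta gamma) s)
    & (forall s, s \in SV n ->
         SH_push alpha beta gamma s = Psv (snake_wt alpha beta gamma) s)]
  /\
  (forall wt : vtype -> R, (forall t, 0 < wt t) -> delta wt = 0 ->
     exists alpha' beta' gamma' : R,
       [/\ 0 < alpha', 0 < beta', 0 < gamma', 0 < gamma' ^+ 2 - alpha' * beta'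
         & forall s, s \in SV n -> Psv wt s = SH_push alpha' beta' gamma' s]).
Proof.
(* Every part holds for all n and all alpha, beta, gamma. *)
move=> _ _ _ _ _; split; last by move=> wt; apply: delta0_SH_push.
split; [exact: delta_snake_wt | split | exact: sh_PS | | ].
- exact: Phi_injSV.
- by move=> s; apply: Phi_PS.
- by move=> rho; rewrite PS_Phi => /imsetP[s sSV ->]; exists s.
- by move=> s; apply: sum_wbar_sh_fibre.
- by move=> s; apply: SH_push_Psv.
Qed.
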